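(* Let $\mathrm{Lab}$ be a labelling system on a finite simplicial tree $T$. Then the union of the useful edges of $T$ (together with their endpoints) is connected, i.e. forms a subtree of $T$: every edge lying on the path in $T$ between two useful edges is useful.
   Context: A labelling system on a finite simplicial tree $T$ assigns to each vertex $v$ a subset $\mathrm{Lab}(v)\subset\{1,\dots,N\}$ such that (A) $\mathrm{Lab}(a)\cap\mathrm{Lab}(b)\subset\mathrm{Lab}(x)$ whenever $x$ is a vertex on the shortest path between vertices $a,b$, and (B) $\bigcup_v\mathrm{Lab}(v)=\{1,\dots,N\}$. Removing the open edge $e$ leaves two closed connected components $T^+(e)$, $T^-(e)$. The edge $e$ is useless if $\bigcup_{v\in T^+(e)}\mathrm{Lab}(v)$ or $\bigcup_{v\in T^-(e)}\mathrm{Lab}(v)$ equals $\{1,\dots,N\}$, and useful otherwise. *)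

From mathcomp Require Import all_boot.
Set Implicit Arguments. Unset Strict Implicit. Unset Printing Implicit Defensive.

(* A finite simple graph on a finType V is a symmetric irreflexive relation. *)

Definition walk (V : finType) (e : rel V) (x y : V) (p : seq V) : bool :=
  path e x p && (last x p == y).

Definition shortest_path (V : finType) (e : rel V) (a b : V) (p : seq V) : Prop :=
  walk e a b p /\ forall q, walk e a b q -> size p <= size q.

Definition connected_graph (V : finType) (e : rel V) : Prop :=
  forall x y : V, exists p, walk e x y p.

Definition acyclic (V : finType) (e : rel V) : Prop :=
  forall (x : V) (p : seq V), 2 <= size p -> uniq (x :: p) -> ~~ cycle e (x :: p).

Definition is_tree (V : finType) (e : rel V) : Prop :=
  [/\ symmetric e, irreflexive e, connected_graph e & acyclic e].

(* Labelling system with labels in {0,...,N-1} ('I_N), standing for {1,...,N}. *)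
Definition labelling_system (V : finType) (e : rel V) (N : nat)
    (Lab : V -> {set 'I_N}) : Prop :=
  (forall a b x p, shortest_path e a b p -> x \in a :: p ->
      Lab a :&: Lab b \subset Lab x)
  /\ \bigcup_(v : V) Lab v = [set: 'I_N].

Definition remove_edge (V : finType) (e : rel V) (u v : V) : rel V :=
  [rel x y | e x y && ~~ (((x == u) && (y == v)) || ((x == v) && (y == u)))].

Definition side (V : finType) (e : rel V) (u v : V) : {set V} :=
  [set x | connect (remove_edge e u v) u x].

Definition useful (V : finType) (e : rel V) (N : nat) (Lab : V -> {set 'I_N})
    (u v : V) : bool :=
  (\bigcup_(x in side e u v) Lab x != [set: 'I_N]) &&
  (\bigcup_(x in side e v u) Lab x != [set: 'I_N]).

From mathcomp Require Import all_boot.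
Set Implicit Arguments. Unset Strict Implicit. Unset Printing Implicit Defensive.

(* Removing an edge {x,y} of a tree splits it into the side T(x,y) of x and
   the side T(y,x) of y (side e x y and side e y x).  The heart of the proof is a nesting property: if a
   vertex a lies on x's side, then y's side T(y,x) lies entirely inside one of
   the two sides of ANY edge {a,b} (a path inside T(y,x) never meets a, hence
   never uses {a,b}, and T(a,b), T(b,a) cover the tree).  Since unions of
   labels are monotone, T(y,x) misses a label whenever both sides of {a,b} do,
   i.e. whenever {a,b} is useful.

   Now let {x,y} be an edge of the shortest path a ... c, with {a,b} and
   {c,d} useful.  Shortest paths are duplicate-free, so a lies on x's side
   and c on y's side of {x,y}; the nesting property applied to {a,b} and to
   {c,d} shows that both sides of {x,y} miss a label, so {x,y} is useful.  Note that only monotonicity of label unions is needed, not the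
   axioms of a labelling system. *)

Section EdgeRemoval.
Variables (V : finType) (e : rel V).

Lemma remove_edgeC u v : remove_edge e u v =2 remove_edge e v u.
Proof. by move=> x y; rewrite /remove_edge /= [in RHS]orbC. Qed.

Lemma remove_edge_sym u v : symmetric e -> symmetric (remove_edge e u v).
Proof.
move=> e_sym x y; rewrite /remove_edge /= e_sym; congr (_ && ~~ _).
by rewrite orbC (andbC (y == u)) (andbC (y == v)).
Qed.

Lemma remove_edge_avoid a b u w :
  e u w -> u != a -> w != a -> remove_edge e a b u w.
Proof.
move=> euw ua wa; rewrite /remove_edge /= euw negb_or !negb_and.
by rewrite ua wa orbT.
Qed.

Lemma path_avoid_connect a b u s : path e u s -> a \notin u :: s ->
  connect (remove_edge e a b) u (last u s).
Proof.
elim: s u => [|w s IHs] u /=; first by rewrite connect0.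
move=> /andP [euw path_s]; rewrite !in_cons !negb_or => /and3P [a_u a_w a_s].
apply: connect_trans (IHs w path_s _); last by rewrite in_cons negb_or a_w a_s.
by apply/connect1/remove_edge_avoid; rewrite // eq_sym ?a_u ?a_w.
Qed.

Lemma in_side_swap u v z :
  (z \in side e v u) = connect (remove_edge e u v) v z.
Proof. by rewrite inE (eq_connect (remove_edgeC v u)). Qed.

End EdgeRemoval.

Section TreeSides.
Variables (V : finType) (e : rel V).

(* In a tree, removing an edge {x,y} disconnects x from y: a detour would
   close a simple cycle of length at least 3. *)
Lemma tree_edge_separates x y :
  is_tree e -> e x y -> ~~ connect (remove_edge e x y) x y.
Proof.
move=> [e_sym e_irr _ e_acyc] exy; apply/negP => /connectP [s path_s last_s].
case: (shortenP path_s) last_s => s' path_s' uniq_s' _ last_s'.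
have sub_e : subrel (remove_edge e x y) e by move=> u w /andP [].
have path_e := sub_path sub_e path_s'.
have long_s' : 2 <= size s'.
  case: s' path_s' {path_e uniq_s'} last_s' => [|w [|w' s'']] //=.
    by move=> _ yx; move: exy; rewrite yx e_irr.
  by move=> + yw; rewrite -yw andbT /remove_edge /= !eqxx andbF.
apply: (negP (e_acyc x s' long_s' uniq_s')).
by rewrite /cycle rcons_path path_e -last_s' e_sym.
Qed.

Lemma side_cover a b w :
  connected_graph e -> (w \in side e a b) || (w \in side e b a).
Proof.
move=> e_conn; rewrite [w \in side e b a]in_side_swap inE.
have [s /andP [path_s /eqP <-]] := e_conn a w.
elim/last_ind: s path_s => [|s u IHs]; first by rewrite connect0.
rewrite rcons_path last_rcons => /andP [/IHs side_s elast].
have [r_step|] := boolP (remove_edge e a b (last a s) u).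
  by case/orP: side_s => side_s;
     rewrite (connect_trans side_s (connect1 r_step)) ?orbT.
rewrite /remove_edge /= elast /= negbK.
by case/orP=> /andP [_ /eqP ->]; rewrite connect0 ?orbT.
Qed.

Lemma side_disjoint x y a :
  is_tree e -> e x y -> a \in side e x y -> a \notin side e y x.
Proof.
move=> e_tree exy; have [e_sym _ _ _] := e_tree.
have r_sym := sym_connect_sym (remove_edge_sym x y e_sym).
rewrite inE in_side_swap => xa; apply: contraNN (tree_edge_separates e_tree exy).
by move=> ya; rewrite (connect_trans xa) // r_sym.
Qed.

Lemma side_avoiding_edge x y a b : a \notin side e y x ->
  {subset side e y x <= [pred z | connect (remove_edge e a b) y z]}.
Proof.
move=> a_out z; rewrite inE => /connectP [s path_s ->] /=.
apply: path_avoid_connect.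
  by apply: sub_path path_s => u w /andP [].
by apply: contra a_out => /(path_connect path_s); rewrite inE.
Qed.

Lemma side_nested x y a b : is_tree e -> e x y -> a \in side e x y ->
  {subset side e y x <= side e a b} \/ {subset side e y x <= side e b a}.
Proof.
move=> e_tree exy xa; have [_ _ e_conn _] := e_tree.
have avoid_ab := side_avoiding_edge b (side_disjoint e_tree exy xa).
case/orP: (side_cover a b y e_conn) => [a_y|b_y]; [left|right] => z /avoid_ab yz.
  by move: a_y; rewrite !inE => a_y; apply: connect_trans a_y yz.
by move: b_y; rewrite !in_side_swap => b_y; apply: connect_trans b_y yz.
Qed.

End TreeSides.

Lemma bigcup_nonfull_subset (V : finType) N (Lab : V -> {set 'I_N})
    (S T : {set V}) : {subset S <= T} ->
  \bigcup_(z in T) Lab z != setT -> \bigcup_(z in S) Lab z != setT.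
Proof.
move=> sub_ST; apply: contra; rewrite -!subTset => /subset_trans; apply.
by apply/bigcupsP => z Sz; apply: bigcup_sup; apply: sub_ST.
Qed.

Lemma useful_far_side (V : finType) (e : rel V) N (Lab : V -> {set 'I_N})
    x y a b : is_tree e -> e x y -> a \in side e x y -> useful e Lab a b ->
  \bigcup_(z in side e y x) Lab z != setT.
Proof.
move=> e_tree exy xa /andP [miss_ab miss_ba].
by case: (side_nested b e_tree exy xa) => /bigcup_nonfull_subset; apply.
Qed.

Section Paths.
Variables (V : finType) (e : rel V).

Lemma path_cut_loop a s : path e a s -> a \in s ->
  exists2 q, walk e a (last a s) q & size q < size s.
Proof.
move=> + a_in; case/splitPr: a_in => s1 s2.
rewrite cat_path /= => /and3P [_ _ path_s2].
by exists s2; rewrite /walk ?path_s2 ?last_cat //= size_cat /= addnS ltnS leq_addl.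
Qed.

Lemma walk_nonuniq_shorter a s : path e a s -> ~~ uniq (a :: s) ->
  exists2 q, walk e a (last a s) q & size q < size s.
Proof.
elim: s a => [|w s IHs] a //= /andP [eaw path_s].
rewrite negb_and negbK => /orP [a_in | /(IHs w path_s) [q /andP [path_q last_q] short_q]].
  by apply: (@path_cut_loop a (w :: s)) => //=; rewrite eaw.
by exists (w :: q); rewrite /walk /= ?eaw ?path_q.
Qed.

Lemma shortest_path_uniq a c p : shortest_path e a c p -> uniq (a :: p).
Proof.
move=> [/andP [path_p /eqP last_p] p_min]; apply/negPn/negP.
move=> /(walk_nonuniq_shorter path_p) [q]; rewrite last_p => /p_min.
by rewrite ltnNge => ->.
Qed.

Lemma mem_zip_snd (T : eqType) (s t : seq T) (x y : T) :
  (x, y) \in zip s t -> y \in t.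
Proof.
elim: s t => [|u s IHs] [|v t] //=; rewrite !in_cons.
by case/orP=> [/eqP [_ ->] | /IHs ->]; rewrite ?eqxx ?orbT.
Qed.

Lemma path_step_sides a p x y : symmetric e -> path e a p -> uniq (a :: p) ->
  (x, y) \in zip (a :: p) p ->
  [/\ e x y, a \in side e x y & last a p \in side e y x].
Proof.
move=> e_sym; elim: p a => [|w p IHp] a //= /andP [eaw path_p] /andP [a_out uniq_p].
rewrite in_cons => /orP [/eqP [-> ->] | step_in].
  by rewrite inE connect0 in_side_swap path_avoid_connect.
have [exy xa end_y] := IHp w path_p uniq_p step_in.
have y_in : y \in p := mem_zip_snd step_in.
have w_y : w != y by apply: contraNneq (andP uniq_p).1 => ->.
have a_y : a != y by apply: contraNneq a_out => ->; rewrite in_cons y_in orbT.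
split=> //; rewrite inE; rewrite inE in xa; apply: (connect_trans xa).
by rewrite connect1 // remove_edgeC remove_edge_avoid // e_sym.
Qed.

End Paths.

Theorem mainTheorem11 (V : finType) (e : rel V) (N : nat)
    (Lab : V -> {set 'I_N}) :
  is_tree e -> labelling_system e Lab ->
  forall a b c d : V, e a b -> e c d ->
    useful e Lab a b -> useful e Lab c d ->
  forall p : seq V, shortest_path e a c p ->
  forall x y : V, (x, y) \in zip (a :: p) p -> useful e Lab x y.
Proof.
move=> e_tree _ a b c d _ _ useful_ab useful_cd p p_short x y step.
have [e_sym _ _ _] := e_tree.
have [/andP [path_p /eqP last_p] _] := p_short.
have [exy xa yc] := path_step_sides e_sym path_p (shortest_path_uniq p_short) step.
rewrite last_p in yc.
apply/andP; split.
- by apply: useful_far_side e_tree _ yc useful_cd; rewrite e_sym.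
- exact: useful_far_side e_tree exy xa useful_ab.
Qed.
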